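(* On every MAPF-DL instance, and for every choice of tie-breaking, of collisions selected for branching, and of paths returned by the low-level search, CBS-DL generates only finitely many constraint-tree nodes.
   Context: MAPF-DL. An instance consists of a deadline $T_{\mathrm{end}}\in\mathbb{N}$, a finite undirected graph $G=(V,E)$, and $M$ agents $a_1,\dots,a_M$; agent $a_i$ has a start vertex $s_i$ and a goal vertex $g_i$, and the graph distance from $s_i$ to $g_i$ is at most $T_{\mathrm{end}}$. A path for $a_i$ is a map $l_i:\{0,\dots,T_{\mathrm{end}}\}\to V$ with $l_i(0)=s_i$, $l_i(T_{\mathrm{end}})=g_i$, and for each $t\ge1$ either $(l_i(t-1),l_i(t))\in E$ or $l_i(t-1)=l_i(t)$. A plan assigns a path to each agent of some subset (the successful agents); the others are unsuccessful and get no path. Two distinct successful agents $a_i,a_j$ have a vertex collision $(a_i,a_j,v,t)$ if $l_i(t)=l_j(t)=v$, and an edge collision $(a_i,a_j,u,v,t)$ if $u=l_i(t)=l_j(t+1)$ and $v=l_j(t)=l_i(t+1)$. A solution is a plan with no collisions; its cost is the number of unsuccessful agents. Constraints: a vertex constraint $(a_i,v,t)$ forbids $l_i(t)=v$; an edge constraint $(a_i,u,v,t)$ forbids $l_i(t)=u$ together with $l_i(t+1)=v$. A path for $a_i$ obeys a constraint set $C$ if it violates none of the constraints in $C$ concerning $a_i$. Algorithm CBS-DL. Low-level search: given agent $a_i$ and constraint set $C$, it returns some path for $a_i$ obeying $C$ if one exists, and otherwise returns ''no path''. The high level performs best-first search over a constraint tree (CT); each CT node $N$ has a constraint set $N.C$,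 a plan $N.\mathrm{plan}$, and cost $N.\mathrm{cost}$ = number of agents without a path in $N.\mathrm{plan}$. The root has $C=\emptyset$ and the plan containing a low-level path for every agent (cost $0$). OPEN initially contains the root. Repeat: remove from OPEN a node $N$ of minimum cost (ties arbitrary). If $N.\mathrm{plan}$ has no collision, return it. Otherwise pick some collision in $N.\mathrm{plan}$. For a vertex collision $(a_i,a_j,v,t)$ create two children: one with constraints $N.C\cup\{(a_i,v,t)\}$ and one with $N.C\cup\{(a_j,v,t)\}$; for an edge collision $(a_i,a_j,u,v,t)$ the children get $N.C\cup\{(a_i,u,v,t)\}$ and $N.C\cup\{(a_j,v,u,t)\}$, respectively. Each child copies $N.\mathrm{plan}$, and then the path of the agent named in its new constraint is replaced by the low-level search result for that agent under the child's constraint set (the agent's path is deleted if ''no path'' is returned); the child's cost is recomputed and the child is inserted into OPEN. *)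

From mathcomp Require Import all_boot.
From Stdlib Require List.
Set Implicit Arguments. Unset Strict Implicit. Unset Printing Implicit Defensive.

Section CBSDL.
Variables (V : finType) (e : rel V) (M Tend : nat) (s g : 'I_M -> V).

Definition dist_le (x y : V) (n : nat) : Prop :=
  exists p : seq V, [/\ path e x p, last x p = y & size p <= n].

(* a path for agent i: a location function on times 0..Tend (values beyond Tend irrelevant) *)
Definition is_path (i : 'I_M) (l : nat -> V) : Prop :=
  [/\ l 0 = s i, l Tend = g i &
      forall t, 1 <= t <= Tend -> e (l t.-1) (l t) || (l t.-1 == l t)].

Inductive constr : Type :=
  | VC (i : 'I_M) (v : V) (t : nat)
  | EC (i : 'I_M) (u v : V) (t : nat).

Definition respects (i : 'I_M) (l : nat -> V) (c : constr) : Prop :=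
  match c with
  | VC j v t => j = i -> l t <> v
  | EC j u v t => j = i -> ~ (l t = u /\ l t.+1 = v)
  end.

Definition obeys (i : 'I_M) (l : nat -> V) (C : seq constr) : Prop :=
  forall c, List.In c C -> respects i l c.

Definition lowlevel (i : 'I_M) (C : seq constr) (r : option (nat -> V)) : Prop :=
  match r with
  | Some l => is_path i l /\ obeys i l C
  | None => ~ exists l, is_path i l /\ obeys i l C
  end.

Definition plan := 'I_M -> option (nat -> V).

Inductive collision : Type :=
  | VColl (i j : 'I_M) (v : V) (t : nat)
  | EColl (i j : 'I_M) (u v : V) (t : nat).

Definition is_collision (P : plan) (c : collision) : Prop :=
  match c with
  | VColl i j v t => i <> j /\ t <= Tend /\
      exists li lj, [/\ P i = Some li, P j = Some lj, li t = v & lj t = v]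
  | EColl i j u v t => i <> j /\ t < Tend /\
      exists li lj, [/\ P i = Some li, P j = Some lj,
                       u = li t /\ u = lj t.+1 & v = lj t /\ v = li t.+1]
  end.

Record node := Node { nC : seq constr; nplan : plan }.

Definition cost (N : node) : nat := #|[pred i | ~~ isSome (nplan N i)]|.

Definition branch (c : collision) : (constr * 'I_M) * (constr * 'I_M) :=
  match c with
  | VColl i j v t => ((VC i v t, i), (VC j v t, j))
  | EColl i j u v t => ((EC i u v t, i), (EC j v u t, j))
  end.

Definition child (N : node) (ca : constr * 'I_M) (Ch : node) : Prop :=
  exists r, [/\ lowlevel ca.2 (ca.1 :: nC N) r,
                nC Ch = ca.1 :: nC N &
                forall k, nplan Ch k = if k == ca.2 then r else nplan N k].

Definition is_root (N : node) : Prop :=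
  nC N = nil /\ forall i, lowlevel i nil (nplan N i).

Record state := State { OPEN : seq node; generated : nat; returned : bool }.

Definition halted (S : state) : Prop := returned S = true \/ OPEN S = nil.

(* one iteration of the high-level loop; the chosen node N is a min-cost node
   of OPEN (arbitrary tie-breaking), the collision is arbitrary *)
Definition step (S S' : state) : Prop :=
  returned S = false /\
  exists O1 O2 N, OPEN S = O1 ++ N :: O2 /\
    (forall N', List.In N' (OPEN S) -> cost N <= cost N') /\
    ( ((forall c, ~ is_collision (nplan N) c) /\
        S' = State (O1 ++ O2) (generated S) true)
    \/ (exists c Ch1 Ch2, is_collision (nplan N) c /\
          child N (branch c).1 Ch1 /\ child N (branch c).2 Ch2 /\
          S' = State (O1 ++ O2 ++ [:: Ch1; Ch2]) (generated S).+2 false)).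

(* a (possibly stuttering after halting) execution of CBS-DL *)
Definition execution (r : nat -> state) : Prop :=
  (exists root, is_root root /\ r 0 = State [:: root] 1 false) /\
  forall k, step (r k) (r k.+1) \/ (halted (r k) /\ r k.+1 = r k).

End CBSDL.

(* Along every branch of the constraint tree, each child adds a constraint that
   its parent's plan violates, while every path of a plan obeys all constraints
   of its node.  Hence the constraints of a node are pairwise distinct, and since
   only constraints with time at most T_end ever arise, the depth of every CT
   node is bounded by a constant D.  Giving a node of depth d the weight
   2^(D+2-d) - 2, expanding a node replaces its weight by at most two weights of
   the next level while generating two nodes, so the number of generated nodes
   plus the total weight of OPEN never increases. *)

From mathcomp Require Import all_boot.
From Stdlib Require List.
From mathcomp Require Import zify.
Set Implicit Arguments. Unset Strict Implicit. Unset Printing Implicit Defensive.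

Definition depth_weight (D d : nat) := 2 ^ (D.+2 - d) - 2.

Lemma depth_weight_split D d : d <= D -> 2 * depth_weight D d.+1 + 2 <= depth_weight D d.
Proof.
move=> Hd; rewrite /depth_weight subSS (subSn (leqW Hd)) expnS.
have : 2 <= 2 ^ (D.+1 - d) by rewrite -{1}(expn1 2) leq_exp2l // subn_gt0.
lia.
Qed.

Section CBSDLTermination.
Variables (V : finType) (e : rel V) (M Tend : nat) (s g : 'I_M -> V).

Local Notation constr := (constr V M).
Local Notation node := (node V M).
Local Notation child := (child e Tend s g).

Definition constr_code : finType :=
  (('I_M * V * 'I_Tend.+1) + ('I_M * V * V * 'I_Tend.+1))%type.

(* Constraints at times beyond [Tend] are sent to [None]; branching never
   creates them. *)
Definition encode_constr (c : constr) : option constr_code :=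
  match c with
  | VC i v t => if t <= Tend then Some (inl (i, v, inord t)) else None
  | EC i u v t => if t <= Tend then Some (inr (i, u, v, inord t)) else None
  end.

Definition decode_constr (x : constr_code) : constr :=
  match x with
  | inl (i, v, t) => VC i v t
  | inr (i, u, v, t) => EC i u v t
  end.

Lemma encode_constrK c x : encode_constr c = Some x -> decode_constr x = c.
Proof. by case: c => [i v t|i u v t] /=; case: ifP => // Ht [<-] /=; rewrite inordK. Qed.

Lemma encode_constr_inj c c' :
  encode_constr c <> None -> encode_constr c' = encode_constr c -> c' = c.
Proof.
case E: (encode_constr c) => [x|] // _ E'.
by rewrite -(encode_constrK E) -(encode_constrK E').
Qed.

Definition sound_node (N : node) : Prop :=
  uniq (map encode_constr (nC N)) /\
  forall k l, nplan N k = Some l -> obeys k l (nC N).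

Definition max_depth := #|{: option constr_code}|.

Lemma sound_node_depth N : sound_node N -> size (nC N) <= max_depth.
Proof.
by case=> /card_uniqP; rewrite size_map => <- _; apply: max_card.
Qed.

Lemma root_sound N : is_root e Tend s g N -> sound_node N.
Proof. by rewrite /sound_node; case=> -> _; split=> // k l _ c []. Qed.

Lemma notin_map_encode (c : constr) C :
  encode_constr c <> None -> ~ List.In c C -> encode_constr c \notin map encode_constr C.
Proof.
move=> Hc; elim: C => //= c' C IH Hnot; rewrite in_cons negb_or IH; last by tauto.
rewrite andbT; apply/eqP => /esym /(encode_constr_inj Hc) Ec'.
by apply: Hnot; left.
Qed.

Lemma child_sound N c a Ch :
  sound_node N -> encode_constr c <> None ->
  (exists2 l, nplan N a = Some l & ~ respects a l c) ->
  (forall k l, k <> a -> respects k l c) ->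
  child N (c, a) Ch -> sound_node Ch.
Proof.
rewrite /sound_node; move=> [uniqN obeyN] Hc [la Hla Hviol] Hothers [r [Hlow -> Hplan]].
have fresh_c : ~ List.In c (nC N) by move=> Hin; apply/Hviol/(obeyN a la Hla).
split; first by rewrite /= uniqN andbT notin_map_encode.
move=> k l; rewrite Hplan; case: eqP => [-> | Hk].
  by case: r {Hplan} Hlow => // l' [_ Hob] [<-].
move=> Hl c' /= [<- | Hin]; [exact: Hothers | exact: obeyN Hl _ Hin].
Qed.

Lemma branch_sound N c Ch1 Ch2 :
  sound_node N -> is_collision Tend (nplan N) c ->
  child N (branch c).1 Ch1 -> child N (branch c).2 Ch2 ->
  sound_node Ch1 /\ sound_node Ch2.
Proof.
move=> HN; case: c => [i j v t | i j u v t] /=.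
  move=> [_ [Ht [li [lj [Hi Hj Hli Hlj]]]]] C1 C2; split.
    apply: child_sound C1 => //=; first by rewrite Ht.
    - by exists li => // /(_ erefl).
    - by move=> k l Hk /= /esym /Hk [].
  apply: child_sound C2 => //=; first by rewrite Ht.
  - by exists lj => // /(_ erefl).
  - by move=> k l Hk /= /esym /Hk [].
move=> [_ [Ht [li [lj [Hi Hj [Hu1 Hu2] [Hv1 Hv2]]]]]] C1 C2; split.
  apply: child_sound C1 => //=; first by rewrite ltnW.
  - by exists li => // /(_ erefl); apply; split.
  - by move=> k l Hk /= /esym /Hk [].
apply: child_sound C2 => //=; first by rewrite ltnW.
- by exists lj => // /(_ erefl); apply; split.
- by move=> k l Hk /= /esym /Hk [].
Qed.

Lemma child_depth N ca Ch : child N ca Ch -> size (nC Ch) = (size (nC N)).+1.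
Proof. by case=> r [_ -> _]. Qed.

Definition open_weight (O : seq node) :=
  sumn [seq depth_weight max_depth (size (nC N)) | N <- O].

Lemma open_weight_cat O1 O2 : open_weight (O1 ++ O2) = open_weight O1 + open_weight O2.
Proof. by rewrite /open_weight map_cat sumn_cat. Qed.

Lemma open_weight_cons N O :
  open_weight (N :: O) = depth_weight max_depth (size (nC N)) + open_weight O.
Proof. by []. Qed.

Definition state_inv (S : state V M) : Prop :=
  (forall N, List.In N (OPEN S) -> sound_node N) /\
  generated S + open_weight (OPEN S) <= 1 + depth_weight max_depth 0.

Lemma step_inv S S' : state_inv S -> step e Tend s g S S' -> state_inv S'.
Proof.
move=> [soundS budgetS] [_ [O1 [O2 [N [HO [_ Hcase]]]]]].
have soundN : sound_node N by apply: soundS; rewrite HO; apply: List.in_elt.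
have soundO12 N' : List.In N' (O1 ++ O2) -> sound_node N'.
  move/List.in_app_iff=> HN'; apply: soundS; rewrite HO List.in_app_iff /=; tauto.
rewrite HO open_weight_cat open_weight_cons in budgetS.
case: Hcase => [[_ ->] | [c [Ch1 [Ch2 [Hc [C1 [C2 ->]]]]]]] /=.
  by split=> //=; rewrite open_weight_cat; lia.
have [sound1 sound2] := branch_sound soundN Hc C1 C2.
split.
  move=> N' /List.in_app_iff [HN' | /List.in_app_iff [HN' | /= [<- | [<- | []]]]] //;
    by apply: soundO12; apply/List.in_app_iff; tauto.
rewrite !open_weight_cat !open_weight_cons (child_depth C1) (child_depth C2).
have := depth_weight_split (sound_node_depth soundN); rewrite /open_weight /= in budgetS *.
lia.
Qed.

End CBSDLTermination.

Theorem lemma1 (V : finType) (e : rel V) (M Tend : nat) (s g : 'I_M -> V)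
  (Hsym : symmetric e) (Hirr : irreflexive e)
  (Hdist : forall i : 'I_M, dist_le e (s i) (g i) Tend)
  (r : nat -> state V M)
  (Hr : execution e Tend s g r) :
  exists B : nat, forall k : nat, generated (r k) <= B.
Proof.
case: Hr => [[root [Hroot Hr0]] Hrun].
have Hinv k : state_inv Tend (r k).
  elim: k => [|k IHk].
    rewrite /state_inv Hr0 /open_weight /= (proj1 Hroot) addn0.
    by split=> // N [<- | []]; apply: root_sound Hroot.
  by case: (Hrun k) => [/(step_inv IHk) | [_ ->]].
exists (1 + depth_weight (max_depth V M Tend) 0) => k.
by case: (Hinv k) => _; apply: leq_trans; apply: leq_addr.
Qed.
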